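(* Let $(\mathcal{C},\wedge,S)$ be a braided monoidal semiadditive category and $E$ a clopen idempotent. Then $E$ is a retract of $S$. If a complement $S/E$ of $E$ exists, then $S/E$ is also a clopen idempotent, so $E$ and $S/E$ are complementary clopen idempotents. In that case, for all objects $X,Y$ the natural map $\mathcal{C}(X,Y)\to\mathcal{C}(E\wedge X,E\wedge Y)\times\mathcal{C}(S/E\wedge X,S/E\wedge Y)$ is a bijection, so $\mathcal{C}$ splits as the product of its full subcategories of $E$-stable and $E$-torsion objects; in particular an object is $E$-stable iff it is $S/E$-torsion, and vice versa.
   Context: Braided monoidal semiadditive category: braided monoidal category with finite biproducts preserved by $\wedge$ in each variable. A clopen idempotent is $E$ with $r:S\to E$, $i:E\to S$ such that $ri=\mathrm{id}_E$ and $ir\wedge\mathrm{id}_E=\mathrm{id}_E$. A complement of a retract $E$ of $S$ is a retract $S/E$ such that $S\cong E\oplus S/E$ via the given retraction data. $X$ is $E$-stable if $r\wedge\mathrm{id}_X:X\to E\wedge X$ is an isomorphism, and $E$-torsion if $E\wedge X\cong 0$. *)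

Record Category := {
  ob :> Type;
  hom : ob -> ob -> Type;
  idm : forall A, hom A A;
  comp : forall A B C, hom B C -> hom A B -> hom A C;
  comp_idl : forall A B (f : hom A B), comp _ _ _ (idm B) f = f;
  comp_idr : forall A B (f : hom A B), comp _ _ _ f (idm A) = f;
  comp_assoc : forall A B C D (h : hom C D) (g : hom B C) (f : hom A B),
      comp _ _ _ h (comp _ _ _ g f) = comp _ _ _ (comp _ _ _ h g) f
}.
Arguments hom {c} A B.
Arguments idm {c} A.
Arguments comp {c A B C} g f.

Declare Scope cat_scope.
Open Scope cat_scope.
Notation "g ∘ f" := (comp g f) (at level 40, left associativity) : cat_scope.

Definition is_iso {C : Category} {A B : C} (f : hom A B) : Prop :=
  exists g : hom B A, g ∘ f = idm A /\ f ∘ g = idm B.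

Definition isomorphic {C : Category} (A B : C) : Prop :=
  exists f : hom A B, is_iso f.

Record Semiadditive (C : Category) := {
  zerom : forall A B : C, hom A B;
  addm : forall A B : C, hom A B -> hom A B -> hom A B;
  addmA : forall A B (f g h : hom A B),
      addm _ _ f (addm _ _ g h) = addm _ _ (addm _ _ f g) h;
  addmC : forall A B (f g : hom A B), addm _ _ f g = addm _ _ g f;
  add0m : forall A B (f : hom A B), addm _ _ (zerom A B) f = f;
  comp_addl : forall A B D (g g' : hom B D) (f : hom A B),
      (addm _ _ g g') ∘ f = addm _ _ (g ∘ f) (g' ∘ f);
  comp_addr : forall A B D (g : hom B D) (f f' : hom A B),
      g ∘ (addm _ _ f f') = addm _ _ (g ∘ f) (g ∘ f');
  comp_0l : forall A B D (f : hom A B), zerom B D ∘ f = zerom A D;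
  comp_0r : forall A B D (g : hom B D), g ∘ zerom A B = zerom A D;
  zob : C;
  zob_id : idm zob = zerom zob zob;
  bip : C -> C -> C;
  bp1 : forall A B, hom (bip A B) A;
  bp2 : forall A B, hom (bip A B) B;
  bi1 : forall A B, hom A (bip A B);
  bi2 : forall A B, hom B (bip A B);
  bp1i1 : forall A B, bp1 A B ∘ bi1 A B = idm A;
  bp2i2 : forall A B, bp2 A B ∘ bi2 A B = idm B;
  bp1i2 : forall A B, bp1 A B ∘ bi2 A B = zerom B A;
  bp2i1 : forall A B, bp2 A B ∘ bi1 A B = zerom A B;
  bip_sum : forall A B,
      addm _ _ (bi1 A B ∘ bp1 A B) (bi2 A B ∘ bp2 A B) = idm (bip A B)
}.
Arguments zerom {C s} A B.
Arguments addm {C s A B} f g.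
Arguments zob {C} s.
Arguments bip {C} s A B.

Record BraidedMonoidal (C : Category) := {
  tens : C -> C -> C;
  tensm : forall A A' B B', hom A A' -> hom B B' -> hom (tens A B) (tens A' B');
  tensm_id : forall A B, tensm _ _ _ _ (idm A) (idm B) = idm (tens A B);
  tensm_comp : forall A A' A'' B B' B'' (f : hom A A') (g : hom A' A'')
      (f' : hom B B') (g' : hom B' B''),
      tensm _ _ _ _ (g ∘ f) (g' ∘ f')
      = tensm _ _ _ _ g g' ∘ tensm _ _ _ _ f f';
  unit : C;
  asc : forall A B D, hom (tens (tens A B) D) (tens A (tens B D));
  ascinv : forall A B D, hom (tens A (tens B D)) (tens (tens A B) D);
  asc_inv1 : forall A B D, ascinv A B D ∘ asc A B D = idm _;
  asc_inv2 : forall A B D, asc A B D ∘ ascinv A B D = idm _;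
  asc_nat : forall A A' B B' D D' (f : hom A A') (g : hom B B') (h : hom D D'),
      asc A' B' D' ∘ tensm _ _ _ _ (tensm _ _ _ _ f g) h
      = tensm _ _ _ _ f (tensm _ _ _ _ g h) ∘ asc A B D;
  lu : forall A, hom (tens unit A) A;
  lu_iso : forall A, is_iso (lu A);
  lu_nat : forall A A' (f : hom A A'),
      lu A' ∘ tensm _ _ _ _ (idm unit) f = f ∘ lu A;
  ru : forall A, hom (tens A unit) A;
  ru_iso : forall A, is_iso (ru A);
  ru_nat : forall A A' (f : hom A A'),
      ru A' ∘ tensm _ _ _ _ f (idm unit) = f ∘ ru A;
  pentagon : forall A B D F,
      tensm _ _ _ _ (idm A) (asc B D F) ∘ asc A (tens B D) F
        ∘ tensm _ _ _ _ (asc A B D) (idm F)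
      = asc A B (tens D F) ∘ asc (tens A B) D F;
  triangle : forall A B,
      tensm _ _ _ _ (idm A) (lu B) ∘ asc A unit B
      = tensm _ _ _ _ (ru A) (idm B);
  br : forall A B, hom (tens A B) (tens B A);
  br_iso : forall A B, is_iso (br A B);
  br_nat : forall A A' B B' (f : hom A A') (g : hom B B'),
      br A' B' ∘ tensm _ _ _ _ f g = tensm _ _ _ _ g f ∘ br A B;
  hexagon1 : forall A B D,
      asc B D A ∘ br A (tens B D) ∘ asc A B D
      = tensm _ _ _ _ (idm B) (br A D) ∘ asc B A D
          ∘ tensm _ _ _ _ (br A B) (idm D);
  hexagon2 : forall A B D,
      ascinv D A B ∘ br (tens A B) D ∘ ascinv A B D
      = tensm _ _ _ _ (br A D) (idm B) ∘ ascinv A D B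
          ∘ tensm _ _ _ _ (idm A) (br B D)
}.
Arguments tens {C} b A B.
Arguments tensm {C b A A' B B'} f g.
Arguments unit {C} b.

(** * Braided monoidal semiadditive category: the tensor product preserves
    finite biproducts in each variable, i.e. it is additive in each
    variable. *)
Record BMSCat := {
  bcat :> Category;
  bsa : Semiadditive bcat;
  bmon : BraidedMonoidal bcat;
  tens_addl : forall (A A' B B' : bcat) (f f' : hom A A') (g : hom B B'),
      tensm (b := bmon) (addm (s := bsa) f f') g
      = addm (s := bsa) (tensm (b := bmon) f g) (tensm (b := bmon) f' g);
  tens_0l : forall (A A' B B' : bcat) (g : hom B B'),
      tensm (b := bmon) (zerom (s := bsa) A A') g
      = zerom (s := bsa) (tens bmon A B) (tens bmon A' B');
  tens_addr : forall (A A' B B' : bcat) (f : hom A A') (g g' : hom B B'),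
      tensm (b := bmon) f (addm (s := bsa) g g')
      = addm (s := bsa) (tensm (b := bmon) f g) (tensm (b := bmon) f g');
  tens_0r : forall (A A' B B' : bcat) (f : hom A A'),
      tensm (b := bmon) f (zerom (s := bsa) B B')
      = zerom (s := bsa) (tens bmon A B) (tens bmon A' B')
}.

Notation "X ⊗[ C ] Y" := (tens (bmon C) X Y) (at level 35) : cat_scope.
Definition tensor {C : BMSCat} {A A' B B' : C} (f : hom A A') (g : hom B B')
  : hom (tens (bmon C) A B) (tens (bmon C) A' B') := tensm (b := bmon C) f g.
Definition zero {C : BMSCat} (A B : C) : hom A B := zerom (s := bsa C) A B.
Definition plus {C : BMSCat} {A B : C} (f g : hom A B) : hom A B :=
  addm (s := bsa C) f g.
Definition Sunit (C : BMSCat) : C := unit (bmon C).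
Definition zero_obj (C : BMSCat) : C := zob (bsa C).
Definition biprod {C : BMSCat} (A B : C) : C := bip (bsa C) A B.

Definition retract_of_unit {C : BMSCat} (E : C)
    (r : hom (Sunit C) E) (i : hom E (Sunit C)) : Prop :=
  r ∘ i = idm E.

Definition clopen_idempotent {C : BMSCat} (E : C)
    (r : hom (Sunit C) E) (i : hom E (Sunit C)) : Prop :=
  r ∘ i = idm E /\ tensor (i ∘ r) (idm E) = idm (tens (bmon C) (Sunit C) E).

(** A complement [F = S/E] of the retract [(E, r, i)]: a retract [(F, r', i')]
    of [S] such that [S ≅ E ⊕ F] via the given retraction data, i.e. the
    data [(i, i', r, r')] exhibit [S] as a biproduct of [E] and [F]. *)
Definition complement {C : BMSCat} (E : C)
    (r : hom (Sunit C) E) (i : hom E (Sunit C))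
    (F : C) (r' : hom (Sunit C) F) (i' : hom F (Sunit C)) : Prop :=
  r' ∘ i' = idm F /\ r ∘ i' = zero F E /\ r' ∘ i = zero E F /\
  plus (i ∘ r) (i' ∘ r') = idm (Sunit C).

(** [X] is [E]-stable: [r ∧ id_X : S ∧ X -> E ∧ X] is an isomorphism
    (with [X] identified with [S ∧ X] via the left unitor). *)
Definition E_stable {C : BMSCat} (E : C) (r : hom (Sunit C) E) (X : C) : Prop :=
  is_iso (tensor r (idm X)).

Definition E_torsion {C : BMSCat} (E : C) (X : C) : Prop :=
  isomorphic (tens (bmon C) E X) (zero_obj C).

Definition bijective_map {A B : Type} (f : A -> B) : Prop :=
  (forall x y, f x = f y -> x = y) /\ (forall b, exists a, f a = b).

From Stdlib Require Import ClassicalEpsilon.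
From mathcomp Require Import ssreflect.

(* Write η_X : X -> S ∧ X -> E ∧ X and ε_X : E ∧ X -> S ∧ X -> X for the maps
   induced by r and i.  If r i = 1 then η ε = 1 and E ∧ η_X = η_(E ∧ X), so
   naturality of η gives E ∧ (ε_Y a η_X) = a for every a : E ∧ X -> E ∧ Y.
   Given a complement S/E, the clopen condition amounts to S/E ∧ E = 0, and the
   braiding gives E ∧ S/E = 0.  The decomposition 1_S = i r + i' r' writes every
   f : X -> Y as the sum of its E-part and its S/E-part; this yields faithfulness,
   the splitting X ≅ (E ∧ X) ⊕ (S/E ∧ X), and the identification of E-stable
   objects with S/E-torsion ones. *)

Section Inverse.
Variables (C : Category) (A B : C) (f : hom A B) (f_iso : is_iso f).

Definition inv : hom B A := proj1_sig (constructive_indefinite_description _ f_iso).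

Lemma inv_comp : inv ∘ f = idm A.
Proof. exact: (proj1 (proj2_sig (constructive_indefinite_description _ f_iso))). Qed.

Lemma comp_inv : f ∘ inv = idm B.
Proof. exact: (proj2 (proj2_sig (constructive_indefinite_description _ f_iso))). Qed.

End Inverse.
Arguments inv {C A B f} f_iso.
Arguments inv_comp {C A B f} f_iso.
Arguments comp_inv {C A B f} f_iso.

Section BraidedMonoidalSemiadditive.
Context {C : BMSCat}.

Local Notation "f ⊠ g" := (tensor (C:=C) f g) (at level 34).
Local Notation "f ⊕ g" := (plus (C:=C) f g) (at level 50, left associativity).
Local Notation "X ⊗ Y" := (tens (bmon C) X Y) (at level 35).
Local Notation S := (Sunit C).
Local Notation LU A := (lu _ (bmon C) A).
Local Notation LUi A := (inv (lu_iso _ (bmon C) A)).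
Local Notation RU A := (ru _ (bmon C) A).
Local Notation RUi A := (inv (ru_iso _ (bmon C) A)).
Local Notation AS A B D := (asc _ (bmon C) A B D).
Local Notation ASi A B D := (ascinv _ (bmon C) A B D).

Lemma compA {A B D F : C} (h : hom D F) (g : hom B D) (f : hom A B) :
  h ∘ (g ∘ f) = h ∘ g ∘ f.
Proof. exact: comp_assoc. Qed.
Lemma comp1m {A B : C} (f : hom A B) : idm B ∘ f = f.
Proof. exact: comp_idl. Qed.
Lemma compm1 {A B : C} (f : hom A B) : f ∘ idm A = f.
Proof. exact: comp_idr. Qed.
Lemma plusC {A B : C} (f g : hom A B) : f ⊕ g = g ⊕ f.
Proof. exact: addmC. Qed.
Lemma plus0m {A B : C} (f : hom A B) : zero A B ⊕ f = f.
Proof. exact: add0m. Qed.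
Lemma plusm0 {A B : C} (f : hom A B) : f ⊕ zero A B = f.
Proof. by rewrite plusC plus0m. Qed.
Lemma compDl {A B D : C} (g g' : hom B D) (f : hom A B) : (g ⊕ g') ∘ f = g ∘ f ⊕ g' ∘ f.
Proof. exact: comp_addl. Qed.
Lemma compDr {A B D : C} (g : hom B D) (f f' : hom A B) : g ∘ (f ⊕ f') = g ∘ f ⊕ g ∘ f'.
Proof. exact: comp_addr. Qed.
Lemma comp0l {A B D : C} (f : hom A B) : zero B D ∘ f = zero A D.
Proof. exact: comp_0l. Qed.
Lemma comp0r {A B D : C} (g : hom B D) : g ∘ zero A B = zero A D.
Proof. exact: comp_0r. Qed.

Lemma tensor_comp {A A' A'' B B' B'' : C}
    (f : hom A A') (g : hom A' A'') (f' : hom B B') (g' : hom B' B'') :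
  (g ∘ f) ⊠ (g' ∘ f') = (g ⊠ g') ∘ (f ⊠ f').
Proof. exact: (tensm_comp _ (bmon C)). Qed.
Lemma tensor_id (A B : C) : idm A ⊠ idm B = idm (A ⊗ B).
Proof. exact: (tensm_id _ (bmon C)). Qed.
Lemma tensorDl {A A' B B' : C} (f f' : hom A A') (g : hom B B') :
  (f ⊕ f') ⊠ g = f ⊠ g ⊕ f' ⊠ g.
Proof. exact: tens_addl. Qed.
Lemma tensorDr {A A' B B' : C} (f : hom A A') (g g' : hom B B') :
  f ⊠ (g ⊕ g') = f ⊠ g ⊕ f ⊠ g'.
Proof. exact: tens_addr. Qed.
Lemma tensor0l {A A' B B' : C} (g : hom B B') : zero A A' ⊠ g = zero (A ⊗ B) (A' ⊗ B').
Proof. exact: tens_0l. Qed.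
Lemma tensor0r {A A' B B' : C} (f : hom A A') : f ⊠ zero B B' = zero (A ⊗ B) (A' ⊗ B').
Proof. exact: tens_0r. Qed.

Lemma tensor_comp_idl {A B B' B'' : C} (f : hom B B') (g : hom B' B'') :
  idm A ⊠ (g ∘ f) = (idm A ⊠ g) ∘ (idm A ⊠ f).
Proof. by rewrite -tensor_comp comp1m. Qed.
Lemma tensor_comp_idr {A A' A'' B : C} (f : hom A A') (g : hom A' A'') :
  (g ∘ f) ⊠ idm B = (g ⊠ idm B) ∘ (f ⊠ idm B).
Proof. by rewrite -tensor_comp comp1m. Qed.
Lemma tensor_factor_lr {A A' B B' : C} (f : hom A A') (g : hom B B') :
  f ⊠ g = (f ⊠ idm B') ∘ (idm A ⊠ g).
Proof. by rewrite -tensor_comp comp1m compm1. Qed.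
Lemma tensor_factor_rl {A A' B B' : C} (f : hom A A') (g : hom B B') :
  f ⊠ g = (idm A' ⊠ g) ∘ (f ⊠ idm B).
Proof. by rewrite -tensor_comp comp1m compm1. Qed.

Lemma asc_natural {A A' B B' D D' : C} (f : hom A A') (g : hom B B') (h : hom D D') :
  AS A' B' D' ∘ ((f ⊠ g) ⊠ h) = (f ⊠ (g ⊠ h)) ∘ AS A B D.
Proof. exact: asc_nat. Qed.
Lemma lu_natural {A A' : C} (f : hom A A') : LU A' ∘ (idm S ⊠ f) = f ∘ LU A.
Proof. exact: lu_nat. Qed.
Lemma ru_natural {A A' : C} (f : hom A A') : RU A' ∘ (f ⊠ idm S) = f ∘ RU A.
Proof. exact: ru_nat. Qed.
Lemma triangle_eq (A B : C) : (idm A ⊠ LU B) ∘ AS A S B = RU A ⊠ idm B.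
Proof. exact: triangle. Qed.
Lemma pentagon_eq (A B D F : C) :
  (idm A ⊠ AS B D F) ∘ AS A (B ⊗ D) F ∘ (AS A B D ⊠ idm F)
  = AS A B (D ⊗ F) ∘ AS (A ⊗ B) D F.
Proof. exact: pentagon. Qed.

Lemma lu_conj {A A' : C} (f : hom A A') : f = LU A' ∘ (idm S ⊠ f) ∘ LUi A.
Proof. by rewrite lu_natural -compA comp_inv compm1. Qed.
Lemma tensor_unit_conj {A A' : C} (f : hom A A') : idm S ⊠ f = LUi A' ∘ f ∘ LU A.
Proof. by rewrite -compA -lu_natural compA inv_comp comp1m. Qed.
Lemma luV_natural {A A' : C} (f : hom A A') : (idm S ⊠ f) ∘ LUi A = LUi A' ∘ f.
Proof. by rewrite tensor_unit_conj -!compA comp_inv compm1. Qed.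
Lemma ru_conj {A A' : C} (f : hom A A') : f = RU A' ∘ (f ⊠ idm S) ∘ RUi A.
Proof. by rewrite ru_natural -compA comp_inv compm1. Qed.

(* Kelly's argument: precompose with an iso built from two associators, then use
   the pentagon and the triangle. *)
Lemma lu_asc (X Y : C) : LU (X ⊗ Y) ∘ AS S X Y = LU X ⊠ idm Y.
Proof.
set Q := AS S (S ⊗ X) Y ∘ (AS S S X ⊠ idm Y).
set Q' := (ASi S S X ⊠ idm Y) ∘ ASi S (S ⊗ X) Y.
have QQ' : Q ∘ Q' = idm _.
  rewrite /Q /Q' compA -(compA (AS _ _ _)) -tensor_comp_idr asc_inv2 tensor_id.
  by rewrite compm1 asc_inv2.
suff H : (idm S ⊠ (LU (X ⊗ Y) ∘ AS S X Y)) ∘ Q = (idm S ⊠ (LU X ⊠ idm Y)) ∘ Q.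
  rewrite [LHS]lu_conj [RHS]lu_conj; congr (_ ∘ _ ∘ _).
  by rewrite -[LHS]compm1 -QQ' compA H -compA QQ' compm1.
rewrite /Q tensor_comp_idl !compA -!(compA (idm S ⊠ LU _)) pentagon_eq.
rewrite compA triangle_eq -(tensor_id X Y) -asc_natural -triangle_eq tensor_comp_idr.
by rewrite -asc_natural -compA -tensor_comp_idr.
Qed.

Lemma lu_unit : LU S = RU S.
Proof.
have lu_tensor Y : LU (S ⊗ Y) = idm S ⊠ LU Y by rewrite tensor_unit_conj inv_comp comp1m.
have lu_ru_tensor Y : LU S ⊠ idm Y = RU S ⊠ idm Y.
  by rewrite -lu_asc -triangle_eq lu_tensor.
by rewrite [LHS]ru_conj lu_ru_tensor -ru_conj.
Qed.

Lemma asc_ruV (A X : C) : AS A S X ∘ (RUi A ⊠ idm X) = idm A ⊠ LUi X.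
Proof.
rewrite -[LHS]comp1m -(tensor_id A (S ⊗ X)) -(inv_comp (lu_iso _ (bmon C) X)).
by rewrite tensor_comp_idl -compA (compA (idm A ⊠ LU X)) triangle_eq
  -tensor_comp_idr comp_inv tensor_id compm1.
Qed.

Lemma asc_luV (A X : C) : AS S A X ∘ (LUi A ⊠ idm X) = LUi (A ⊗ X).
Proof.
rewrite -[LHS]comp1m -(inv_comp (lu_iso _ (bmon C) (A ⊗ X))) -!compA (compA (LU _)).
by rewrite lu_asc -tensor_comp_idr comp_inv tensor_id compm1.
Qed.

Definition tens_retr {E : C} (r : hom S E) (X : C) : hom X (E ⊗ X) :=
  (r ⊠ idm X) ∘ LUi X.
Definition tens_incl {E : C} (i : hom E S) (X : C) : hom (E ⊗ X) X :=
  LU X ∘ (i ⊠ idm X).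

Lemma tens_retr_natural {E Z Z' : C} (r : hom S E) (g : hom Z Z') :
  tens_retr r Z' ∘ g = (idm E ⊠ g) ∘ tens_retr r Z.
Proof.
by rewrite /tens_retr -compA -luV_natural compA -tensor_factor_lr tensor_factor_rl compA.
Qed.

Lemma tens_retr_incl {A B : C} (r : hom S A) (i : hom B S) (X : C) :
  tens_retr r X ∘ tens_incl i X = (r ∘ i) ⊠ idm X.
Proof.
by rewrite /tens_retr /tens_incl compA -(compA _ (LUi X)) inv_comp compm1 -tensor_comp_idr.
Qed.

Lemma tens_incl_retr {A X Y : C} (r : hom S A) (i : hom A S) (f : hom X Y) :
  tens_incl i Y ∘ (idm A ⊠ f) ∘ tens_retr r X = LU Y ∘ ((i ∘ r) ⊠ f) ∘ LUi X.
Proof.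
rewrite /tens_retr /tens_incl !compA -(compA _ (i ⊠ idm Y)) -tensor_factor_lr.
by rewrite -(compA _ (i ⊠ f)) -tensor_comp compm1.
Qed.

Section Retract.
Context {E : C} {r : hom S E} {i : hom E S}.
Hypothesis ri : r ∘ i = idm E.

(* Both maps are inverse to [ρ_E ∘ (1 ∧ i) : E ∧ E -> E]. *)
Lemma retract_swap : (idm E ⊠ r) ∘ RUi E = tens_retr r E.
Proof.
set phi := RU E ∘ (idm E ⊠ i).
have phi_retr : phi ∘ tens_retr r E = idm E.
  rewrite /phi /tens_retr compA -(compA (RU E)) -tensor_factor_rl tensor_factor_lr.
  by rewrite compA ru_natural -!compA luV_natural -lu_unit (compA (LU S)) comp_inv comp1m ri.
have psi_phi : (idm E ⊠ r) ∘ RUi E ∘ phi = idm (E ⊗ E).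
  by rewrite /phi compA -(compA _ (RUi E)) inv_comp compm1 -tensor_comp_idl ri tensor_id.
by rewrite -[RHS]comp1m -psi_phi -compA phi_retr compm1.
Qed.

Lemma tensor_tens_retr (X : C) : idm E ⊠ tens_retr r X = tens_retr r (E ⊗ X).
Proof.
rewrite /tens_retr tensor_comp_idl -asc_ruV compA -asc_natural -compA -tensor_comp_idr.
by rewrite retract_swap /tens_retr tensor_comp_idr compA asc_natural tensor_id -compA asc_luV.
Qed.

Lemma tensor_full (X Y : C) (a : hom (E ⊗ X) (E ⊗ Y)) :
  idm E ⊠ (tens_incl i Y ∘ a ∘ tens_retr r X) = a.
Proof.
rewrite (tensor_comp_idl (tens_retr r X)) (tensor_comp_idl a) tensor_tens_retr.
rewrite -compA -tens_retr_natural.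
by rewrite compA -tens_retr_natural tens_retr_incl ri tensor_id comp1m.
Qed.

End Retract.

Definition is_zero (X : C) : Prop := idm X = zero X X.

Lemma is_zeroP (X : C) : isomorphic X (zero_obj C) <-> is_zero X.
Proof.
have zero_obj0 : idm (zero_obj C) = zero _ _ by exact: (zob_id _ (bsa C)).
split=> [[f [g [gf _]]] | X0].
  by rewrite /is_zero -gf -[f]comp1m zero_obj0 comp0l comp0r.
by exists (zero _ _), (zero _ _); rewrite !comp0r X0 zero_obj0.
Qed.

Lemma is_zero_domain {X Y : C} (f : hom X Y) : is_zero X -> f = zero X Y.
Proof. by move=> X0; rewrite -[f]compm1 X0 comp0r. Qed.

Lemma is_zero_codomain {X Y : C} (f : hom X Y) : is_zero Y -> f = zero X Y.
Proof. by move=> Y0; rewrite -[f]comp1m Y0 comp0l. Qed.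

Lemma is_zero_retract {X Y : C} (s : hom Y X) (p : hom X Y) :
  p ∘ s = idm Y -> is_zero X -> is_zero Y.
Proof. by move=> ps X0; rewrite /is_zero -ps (is_zero_domain p X0) comp0l. Qed.

Lemma is_zero_tensorl (A B : C) : is_zero A -> is_zero (A ⊗ B).
Proof. by move=> A0; rewrite /is_zero -tensor_id A0 tensor0l. Qed.

Lemma is_zero_tensor_assoc {A B : C} (D : C) : is_zero (A ⊗ B) -> is_zero (A ⊗ (B ⊗ D)).
Proof. by move=> /(is_zero_tensorl _ D); apply: is_zero_retract (asc_inv2 _ _ _ _ _). Qed.

Lemma is_zero_braid {A B : C} : is_zero (A ⊗ B) -> is_zero (B ⊗ A).
Proof. by apply: is_zero_retract (comp_inv (br_iso _ (bmon C) A B)). Qed.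

Lemma tensor_zero_factor {E X Y Z : C} (h : hom Z Y) (k : hom X Z) :
  is_zero (E ⊗ Z) -> idm E ⊠ (h ∘ k) = zero (E ⊗ X) (E ⊗ Y).
Proof. by move=> EZ0; rewrite tensor_comp_idl (is_zero_codomain (idm E ⊠ k)) // comp0r. Qed.

Lemma isomorphic_biprod {X A B : C} (u1 : hom X A) (v1 : hom A X) (u2 : hom X B) (v2 : hom B X) :
  v1 ∘ u1 ⊕ v2 ∘ u2 = idm X -> u1 ∘ v1 = idm A -> u2 ∘ v2 = idm B ->
  u1 ∘ v2 = zero B A -> u2 ∘ v1 = zero A B -> isomorphic X (biprod A B).
Proof.
move=> vu uv1 uv2 uv12 uv21.
have p1i1 : bp1 _ (bsa C) A B ∘ bi1 _ (bsa C) A B = idm A by exact: bp1i1.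
have p2i2 : bp2 _ (bsa C) A B ∘ bi2 _ (bsa C) A B = idm B by exact: bp2i2.
have p1i2 : bp1 _ (bsa C) A B ∘ bi2 _ (bsa C) A B = zero B A by exact: bp1i2.
have p2i1 : bp2 _ (bsa C) A B ∘ bi1 _ (bsa C) A B = zero A B by exact: bp2i1.
have ip : bi1 _ (bsa C) A B ∘ bp1 _ (bsa C) A B ⊕ bi2 _ (bsa C) A B ∘ bp2 _ (bsa C) A B
          = idm (biprod A B) by exact: bip_sum.
exists (bi1 _ (bsa C) A B ∘ u1 ⊕ bi2 _ (bsa C) A B ∘ u2).
exists (v1 ∘ bp1 _ (bsa C) A B ⊕ v2 ∘ bp2 _ (bsa C) A B); split.
  rewrite compDr !compDl -!compA !(compA (bp1 _ _ _ _)) !(compA (bp2 _ _ _ _)).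
  by rewrite p1i1 p2i2 p1i2 p2i1 !comp1m !comp0l !comp0r plusm0 plus0m.
rewrite compDr !compDl -!compA !(compA u1) !(compA u2) uv1 uv2 uv12 uv21.
by rewrite !comp1m !comp0l !comp0r plusm0 plus0m.
Qed.

Section Complement.
Context {E F : C} {r : hom S E} {i : hom E S} {r' : hom S F} {i' : hom F S}.
Hypothesis compl : complement E r i F r' i'.

Lemma complement_sym : retract_of_unit E r i -> complement F r' i' E r i.
Proof. by case: compl => r'i' [ri' [r'i sum]] ri; rewrite /complement plusC. Qed.

Lemma tens_decomp {X Y : C} (f : hom X Y) :
  f = tens_incl i Y ∘ (idm E ⊠ f) ∘ tens_retr r X
      ⊕ tens_incl i' Y ∘ (idm F ⊠ f) ∘ tens_retr r' X.
Proof.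
case: compl => _ [_ [_ sum]].
by rewrite !tens_incl_retr -compDl -compDr -tensorDl sum -lu_conj.
Qed.

Lemma tensor_faithful {X Y : C} (f g : hom X Y) :
  idm E ⊠ f = idm E ⊠ g -> idm F ⊠ f = idm F ⊠ g -> f = g.
Proof. by move=> fgE fgF; rewrite [LHS]tens_decomp [RHS]tens_decomp fgE fgF. Qed.

Lemma tensor_zero_of_clopen : (i ∘ r) ⊠ idm E = idm (S ⊗ E) -> is_zero (F ⊗ E).
Proof.
case: compl => r'i' [_ [r'i _]] clopen.
have e'E0 : (i' ∘ r') ⊠ idm E = zero _ _.
  rewrite -[LHS]compm1 -clopen -tensor_comp comp1m compA -(compA i') r'i.
  by rewrite comp0r comp0l tensor0l.
rewrite /is_zero -tensor_id.
have -> : idm F = r' ∘ (i' ∘ r') ∘ i' by rewrite compA r'i' comp1m r'i'.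
by rewrite tensor_comp_idr (tensor_comp_idr (i' ∘ r')) e'E0 comp0r comp0l.
Qed.

Lemma clopen_of_tensor_zero : is_zero (F ⊗ E) -> (i ∘ r) ⊠ idm E = idm (S ⊗ E).
Proof.
case: compl => _ [_ [_ sum]] FE0.
rewrite -tensor_id -sum tensorDl (tensor_comp_idr r').
by rewrite (is_zero_codomain (r' ⊠ idm E)) // comp0r plusm0.
Qed.

Hypothesis ri : retract_of_unit E r i.

Lemma stable_iff_torsion (X : C) : is_iso (r ⊠ idm X) <-> is_zero (F ⊗ X).
Proof.
case: compl => r'i' [ri' [_ sum]].
split=> [[s [sr _]] | FX0].
  have i'X0 : i' ⊠ idm X = zero _ _.
    by rewrite -[LHS]comp1m -sr -compA -tensor_comp_idr ri' tensor0l comp0r.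
  by rewrite /is_zero -tensor_id -r'i' tensor_comp_idr i'X0 comp0r.
exists (i ⊠ idm X); rewrite -!tensor_comp_idr ri tensor_id; split=> //.
have e'X0 : (i' ∘ r') ⊠ idm X = zero _ _.
  by rewrite tensor_comp_idr (is_zero_codomain (r' ⊠ idm X)) // comp0r.
by rewrite -[(i ∘ r) ⊠ _]plusm0 -e'X0 -tensorDl sum tensor_id.
Qed.

Lemma isomorphic_tens_biprod (X : C) : isomorphic X (biprod (E ⊗ X) (F ⊗ X)).
Proof.
case: compl => r'i' [ri' [r'i _]].
apply: (isomorphic_biprod (tens_retr r X) (tens_incl i X) (tens_retr r' X) (tens_incl i' X)).
- by rewrite [RHS](tens_decomp (idm X)) !tensor_id !compm1.
- by rewrite tens_retr_incl ri tensor_id.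
- by rewrite tens_retr_incl r'i' tensor_id.
- by rewrite tens_retr_incl ri' tensor0l.
- by rewrite tens_retr_incl r'i tensor0l.
Qed.

Lemma tensor_full_pair {X Y : C} (a : hom (E ⊗ X) (E ⊗ Y)) (b : hom (F ⊗ X) (F ⊗ Y)) :
  is_zero (F ⊗ E) -> is_zero (E ⊗ F) ->
  exists f : hom X Y, (idm E ⊠ f, idm F ⊠ f) = (a, b).
Proof.
case: compl => r'i' _ FE0 EF0.
exists (tens_incl i Y ∘ a ∘ tens_retr r X ⊕ tens_incl i' Y ∘ b ∘ tens_retr r' X).
rewrite !tensorDr !tensor_full // !tensor_zero_factor ?plusm0 ?plus0m //;
  exact: is_zero_tensor_assoc.
Qed.

End Complement.
End BraidedMonoidalSemiadditive.

Theorem proposition3p17 (C : BMSCat) (E : C)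
    (r : hom (Sunit C) E) (i : hom E (Sunit C)) :
  clopen_idempotent E r i ->
  retract_of_unit E r i /\
  (forall (F : C) (r' : hom (Sunit C) F) (i' : hom F (Sunit C)),
     complement E r i F r' i' ->
     (* S/E is a clopen idempotent *)
     clopen_idempotent F r' i' /\
     (* the natural map C(X,Y) -> C(E∧X,E∧Y) × C(S/E∧X,S/E∧Y) is bijective *)
     (forall X Y : C,
        bijective_map (fun f : hom X Y => (tensor (idm E) f, tensor (idm F) f))) /\
     (* C splits as the product of E-stable and E-torsion objects *)
     (forall X : C, exists A B : C,
        E_stable E r A /\ E_torsion E B /\ isomorphic X (biprod A B)) /\
     (forall A B : C, E_stable E r A -> E_torsion E B ->
        (forall f : hom A B, f = zero A B) /\ (forall g : hom B A, g = zero B A)) /\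
     (* E-stable iff S/E-torsion, and vice versa *)
     (forall X : C, E_stable E r X <-> E_torsion F X) /\
     (forall X : C, E_torsion E X <-> E_stable F r' X)).
Proof.
move=> [ri clopenE]; split=> // F r' i' compl.
have [r'i' _] := compl.
have compl' := complement_sym compl ri.
have FE0 := tensor_zero_of_clopen compl clopenE.
have EF0 := is_zero_braid FE0.
have stableE := stable_iff_torsion compl ri.
have stableF := stable_iff_torsion compl' r'i'.
split; first by split; [exact: r'i' | exact: clopen_of_tensor_zero compl' EF0].
split.
  move=> X Y; split=> [f g [fgE fgF] | [a b]]; first exact (tensor_faithful compl f g fgE fgF).
  exact: (tensor_full_pair compl ri a b FE0 EF0).
split.
  move=> X; exists (tens (bmon C) E X), (tens (bmon C) F X); split; last split.
  - by apply/stableE/is_zero_tensor_assoc.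
  - by apply/is_zeroP/is_zero_tensor_assoc.
  - exact: isomorphic_tens_biprod compl ri X.
split.
  move=> A B /stableE FA0 /is_zeroP EB0.
  split=> f; apply: (tensor_faithful compl); rewrite tensor0r;
    by [apply: is_zero_codomain | apply: is_zero_domain].
split=> X; split.
- by move/stableE/is_zeroP.
- by move/is_zeroP/stableE.
- by move/is_zeroP/stableF.
- by move/stableF/is_zeroP.
Qed.
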